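(* Let $A=(a_{ij})\in M(m,\mathbb{C})$ and let $X_A$ be a complex algebra spanned by elements $\{x_{ij}:i,j=1,\ldots,m\}$ satisfying $x_{ij}x_{kl}=a_{jk}x_{il}$. Suppose the elements $x_{ij}$ are linearly independent and $\det A=0$. Then $X_A$ contains a nonzero properly nilpotent element, and consequently $X_A$ is not semisimple.
   Context: An element $z$ of an algebra $\mathcal{X}$ is properly nilpotent if $zx$ (equivalently, $xz$) is nilpotent for every $x\in\mathcal{X}$. An algebra is semisimple if its Jacobson radical (the set of properly nilpotent elements, for finite-dimensional algebras) is zero. *)

From HB Require Import structures.
From mathcomp Require Import all_boot all_order all_algebra.
From mathcomp Require Import reals.
From mathcomp Require Import complex.
Set Implicit Arguments. Unset Strict Implicit. Unset Printing Implicit Defensive.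
Import Order.TTheory GRing.Theory Num.Theory.
Local Open Scope ring_scope.

Definition is_assoc_algebra (K : comNzRingType) (V : lmodType K)
  (mul : V -> V -> V) : Prop :=
  [/\ forall x y z, mul x (mul y z) = mul (mul x y) z,
      forall x y z, mul (x + y) z = mul x z + mul y z,
      forall x y z, mul x (y + z) = mul x y + mul x z,
      forall (a : K) x y, mul (a *: x) y = a *: mul x y
    & forall (a : K) x y, mul x (a *: y) = a *: mul x y].

(* Powers in a possibly non-unital algebra: w^1 = w, w^(n+2) = w * w^(n+1). *)
Fixpoint apow (V : Type) (mul : V -> V -> V) (w : V) (n : nat) : V :=
  match n with
  | 0 => w
  | n'.+1 => mul w (apow mul w n')
  end.

Definition nilpotent_elt (K : comNzRingType) (V : lmodType K)
  (mul : V -> V -> V) (w : V) : Prop := exists n, apow mul w n = 0.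

Definition properly_nilpotent (K : comNzRingType) (V : lmodType K)
  (mul : V -> V -> V) (z : V) : Prop :=
  forall x, nilpotent_elt mul (mul z x).

(* Semisimple (finite-dimensional): the Jacobson radical, i.e. the set of
   properly nilpotent elements, is zero. *)
Definition semisimple (K : comNzRingType) (V : lmodType K)
  (mul : V -> V -> V) : Prop :=
  forall z, properly_nilpotent mul z -> z = 0.

From HB Require Import structures.
From mathcomp Require Import all_boot all_order all_algebra.
From mathcomp Require Import reals.
From mathcomp Require Import complex.
Import Order.TTheory GRing.Theory Num.Theory.
Set Implicit Arguments. Unset Strict Implicit. Unset Printing Implicit Defensive.
Local Open Scope ring_scope.

(* For a matrix C, the element z = sum C_ij x_ij satisfies z x_kl = sum_i (CA)_ik x_il.
   Any nonzero C with CA = 0, e.g. the kernel matrix of the singular A, therefore gives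
   a nonzero z (by linear independence of the x_ij) annihilating every generator on the
   right, hence all of X_A; such a z is trivially properly nilpotent. *)

Section AlgebraSums.

Variables (K : comNzRingType) (V : lmodType K) (mul : V -> V -> V).
Hypothesis mul_alg : is_assoc_algebra mul.

Lemma amul0l w : mul 0 w = 0.
Proof.
case: mul_alg => _ mulDl _ _ _.
by apply: (@addrI _ (mul 0 w)); rewrite -mulDl !addr0.
Qed.

Lemma amul0r w : mul w 0 = 0.
Proof.
case: mul_alg => _ _ mulDr _ _.
by apply: (@addrI _ (mul w 0)); rewrite -mulDr !addr0.
Qed.

Lemma amul_suml (I : Type) (r : seq I) (P : pred I) (F : I -> V) w :
  mul (\sum_(i <- r | P i) F i) w = \sum_(i <- r | P i) mul (F i) w.
Proof.
case: mul_alg => _ mulDl _ _ _.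
by apply: (big_morph (mul^~ w)) => [u v|]; rewrite ?mulDl ?amul0l.
Qed.

Lemma amul_sumr (I : Type) (r : seq I) (P : pred I) (F : I -> V) w :
  mul w (\sum_(i <- r | P i) F i) = \sum_(i <- r | P i) mul w (F i).
Proof.
case: mul_alg => _ _ mulDr _ _.
by apply: (big_morph (mul w)) => [u v|]; rewrite ?mulDr ?amul0r.
Qed.

End AlgebraSums.

Lemma left_annihilator_properly_nilpotent (K : comNzRingType) (V : lmodType K)
    (mul : V -> V -> V) (z : V) :
  (forall w, mul z w = 0) -> properly_nilpotent mul z.
Proof. by move=> zV0 w; exists 0%N; rewrite /= zV0. Qed.

Lemma properly_nilpotent_not_semisimple (K : comNzRingType) (V : lmodType K)
    (mul : V -> V -> V) (z : V) :
  z != 0 -> properly_nilpotent mul z -> ~ semisimple mul.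
Proof. by move=> /eqP z_neq0 z_pn /(_ z z_pn). Qed.

Section MatrixUnitAlgebra.

Variables (K : comNzRingType) (V : lmodType K) (mul : V -> V -> V).
Variables (m : nat) (A : 'M[K]_m) (x : 'I_m -> 'I_m -> V).
Hypothesis mul_alg : is_assoc_algebra mul.
Hypothesis mul_x : forall i j k l, mul (x i j) (x k l) = A j k *: x i l.

Definition xcomb (C : 'M[K]_m) : V := \sum_(i < m) \sum_(j < m) C i j *: x i j.

Lemma mul_xcomb_x C k l :
  mul (xcomb C) (x k l) = \sum_(i < m) (C *m A) i k *: x i l.
Proof.
case: (mul_alg) => _ _ _ mulZl _.
rewrite /xcomb amul_suml //; apply: eq_bigr => i _.
rewrite amul_suml // mxE scaler_suml; apply: eq_bigr => j _.
by rewrite mulZl mul_x scalerA.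
Qed.

Lemma xcomb_left_annihilator C :
  (forall w, exists c : 'I_m -> 'I_m -> K, w = \sum_(i < m) \sum_(j < m) c i j *: x i j) ->
  C *m A = 0 -> forall w, mul (xcomb C) w = 0.
Proof.
move=> x_span CA0 w; have [c ->] := x_span w.
case: (mul_alg) => _ _ _ _ mulZr.
rewrite amul_sumr //; apply: big1 => k _; rewrite amul_sumr //; apply: big1 => l _.
rewrite mulZr mul_xcomb_x CA0 big1 ?scaler0 // => i _.
by rewrite mxE scale0r.
Qed.

Lemma xcomb_eq0 C :
  (forall c : 'I_m -> 'I_m -> K,
     \sum_(i < m) \sum_(j < m) c i j *: x i j = 0 -> forall i j, c i j = 0) ->
  xcomb C = 0 -> C = 0.
Proof. by move=> x_free /x_free C0; apply/matrixP => i j; rewrite C0 mxE. Qed.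

End MatrixUnitAlgebra.

Theorem theorem32 (R : realType) (m : nat) (A : 'M[R[i]]_m)
  (X : lmodType R[i]) (mul : X -> X -> X) (x : 'I_m -> 'I_m -> X)
  (Halg : is_assoc_algebra mul)
  (Hspan : forall v : X, exists c : 'I_m -> 'I_m -> R[i],
      v = \sum_(i < m) \sum_(j < m) c i j *: x i j)
  (Hindep : forall c : 'I_m -> 'I_m -> R[i],
      \sum_(i < m) \sum_(j < m) c i j *: x i j = 0 ->
      forall i j, c i j = 0)
  (Hrel : forall i j k l, mul (x i j) (x k l) = A j k *: x i l)
  (Hdet : \det A = 0) :
  (exists z : X, z != 0 /\ properly_nilpotent mul z) /\ ~ semisimple mul.
Proof.
have kerA_neq0 : kermx A != 0.
  by rewrite kermx_eq0 row_free_unit unitmxE Hdet unitr0.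
pose z := xcomb x (kermx A).
have z_neq0 : z != 0.
  by apply: contra kerA_neq0 => /eqP /(xcomb_eq0 Hindep) ->.
have z_pn : properly_nilpotent mul z.
  exact/left_annihilator_properly_nilpotent/(xcomb_left_annihilator Halg Hrel Hspan)/mulmx_ker.
split; first by exists z.
exact: properly_nilpotent_not_semisimple z_neq0 z_pn.
Qed.
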